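(* Let $\widetilde Q_m(x)=x^mQ_m(1/x)$. Then for all $m\ge 0$, $$\widetilde Q_{m+1}(x)=(2mx+4m+2x+3)\widetilde Q_m(x)+2x(1+x)\widetilde Q_m'(x),\qquad \widetilde Q_0(x)=1.$$
   Context: $P_m(x)=\sum_{i=0}^m d_i(m)x^i$ with $d_i(m)=2^{-2m}\sum_{k=i}^m 2^k\binom{2m-2k}{m-k}\binom{m+k}{k}\binom{k}{i}$ (the Boros–Moll polynomials); $Q_m(x)=2^m m!\,x^mP_m(1/x)$, so $\widetilde Q_m(x)=2^m m!\,P_m(x)$. *)

From HB Require Import structures.
From mathcomp Require Import all_boot all_order all_algebra.
Set Implicit Arguments. Unset Strict Implicit. Unset Printing Implicit Defensive.
Import Order.TTheory GRing.Theory Num.Theory.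
Local Open Scope ring_scope.

Definition bm_coef (m i : nat) : rat :=
  (2 ^+ (2 * m))^-1 *
  \sum_(i <= k < m.+1)
     (2 ^+ k * ('C(2 * m - 2 * k, m - k) * 'C(m + k, k) * 'C(k, i))%:R).

Definition P (m : nat) : {poly rat} := \poly_(i < m.+1) bm_coef m i.

(* Q_m(x) = 2^m m! x^m P_m(1/x): as a polynomial, the coefficient of x^i is
   2^m m! d_{m-i}(m) for i <= m. *)
Definition Q (m : nat) : {poly rat} :=
  \poly_(i < m.+1) ((2 ^ m * m`!)%:R * (P m)`_(m - i)).

(* Qtilde_m(x) = x^m Q_m(1/x): coefficient of x^i is (Q m)`_(m-i), i <= m. *)
Definition Qt (m : nat) : {poly rat} := \poly_(i < m.+1) (Q m)`_(m - i).

(* Unwinding the two reversals in Defs, Qt m = 2^m m! P m (lemma Qt_P).  The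
   key observation is that the Boros--Moll polynomial is a short combination
   of powers of Y = 1 + x: by the binomial theorem,
       4^m P m = S m := \sum_(k <= m) w(m,k) Y^k,
       w(m,k) = 2^k C(2m-2k, m-k) C(m+k, k).
   Write L_m f = (2mx + 4m + 3 + 2x) f + 2x(1+x) f' for the operator of the
   theorem.  Since x = Y - 1, it acts diagonally-plus-shift on powers of Y:
       L_m (Y^k) = (2m+2+2k) Y^(k+1) + (2m+1-2k) Y^k.
   Hence the claim Qt (m+1) = L_m (Qt m), i.e. (m+1) S (m+1) = 2 L_m (S m),
   reduces to three binomial identities for the weights w (lowest, middle
   and top coefficient of Y^j), which follow from the absorption identities
   of binomial coefficients. *)

From Pilot Require Import Defs.
From HB Require Import structures.
From mathcomp Require Import all_boot all_order all_algebra.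
From mathcomp Require Import zify ring lra.
Set Implicit Arguments. Unset Strict Implicit. Unset Printing Implicit Defensive.
Import GRing.Theory Num.Theory.
Local Open Scope ring_scope.

Lemma big_ord_split_ends (V : nmodType) (m : nat) (F : nat -> V) :
  \sum_(k < m.+2) F k = F 0%N + \sum_(k < m) F k.+1 + F m.+1.
Proof. by rewrite big_ord_recl big_ord_recr addrA. Qed.

Lemma sum_shift_regroup (R : pzRingType) (V : lmodType R) (m : nat)
    (u : nat -> V) (f g : nat -> R) :
  \sum_(k < m.+1) (f k *: u k.+1 + g k *: u k) =
  g 0%N *: u 0%N + \sum_(k < m) (f k + g k.+1) *: u k.+1 + f m *: u m.+1.
Proof.
rewrite big_split /= big_ord_recr big_ord_recl /=.
under [X in _ = _ + X + _]eq_bigr do rewrite scalerDl.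
rewrite big_split /= addrACA addrCA [LHS]addrC; congr (_ + _).
by rewrite [RHS]addrCA addrA.
Qed.

Section ShiftedVariable.
Variable R : comNzRingType.
Implicit Types (m k i : nat) (f : {poly R}).

Lemma coef_1addX_exp k i : ((1 + 'X : {poly R}) ^+ k)`_i = 'C(k, i)%:R.
Proof.
elim: k i => [|k IHk] [|i]; rewrite ?expr0 ?coef1 //.
- by rewrite exprS mulrDl mul1r coefD coefXM IHk !bin0 addr0.
- by rewrite exprS mulrDl mul1r coefD coefXM !IHk binS natrD addrC.
Qed.

Lemma deriv_1addX : (1 + 'X : {poly R})^`() = 1.
Proof. by rewrite derivD derivX -polyC1 derivC add0r. Qed.

Definition Lop m f : {poly R} :=
  ((2 * m%:R) *: 'X + (4 * m%:R + 3)%:P + 2 *: 'X) * f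
  + (2 *: 'X * (1 + 'X)) * f^`().

(* L_m is linear, so it suffices to know it on powers of 1 + X. *)
Lemma LopZ m (c : R) f : Lop m (c *: f) = c *: Lop m f.
Proof. by rewrite /Lop derivZ scalerDr -!scalerAr. Qed.

Lemma Lop_sum m n (F : 'I_n -> {poly R}) :
  Lop m (\sum_(k < n) F k) = \sum_(k < n) Lop m (F k).
Proof. by rewrite /Lop raddf_sum !mulr_sumr -big_split. Qed.

Lemma Lop_1addX_exp m k :
  Lop m ((1 + 'X) ^+ k) =
  (2 * m%:R + 2 + 2 * k%:R) *: (1 + 'X) ^+ k.+1
  + (2 * m%:R + 1 - 2 * k%:R) *: (1 + 'X) ^+ k.
Proof.
rewrite /Lop deriv_exp deriv_1addX mul1r.
set Y := (1 + 'X : {poly R}).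
have -> : ('X : {poly R}) = Y - 1 by rewrite /Y addrAC subrr add0r.
rewrite -!mul_polyC !(rmorphD, rmorphM, rmorphB, rmorph_nat, rmorph1) /=.
case: k => [|k]; first by rewrite mulr0n mulr0 !mulr0 expr1 expr0; ring.
by rewrite -mulr_natr /= !exprS; ring.
Qed.

End ShiftedVariable.

Lemma central_bin_succ n :
  (n.+1 * 'C((n.+1).*2, n.+1) = 2 * n.*2.+1 * 'C(n.*2, n))%N.
Proof.
have diag1 := mul_bin_diag (n.+1).*2 n.
have diag2 := mul_bin_diag n.*2.+1 n.
have sym : 'C(n.*2.+1, n.+1) = 'C(n.*2.+1, n).
  by rewrite -bin_sub; [congr 'C(_, _); lia | lia].
rewrite /= sym in diag2; rewrite doubleS /= in diag1 *; nia.
Qed.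

Lemma bin_succ_top n k : (n.+1 * 'C(n.+1 + k, k) = (n.+1 + k) * 'C(n + k, k))%N.
Proof.
have down := mul_bin_down (n.+1 + k) k.
by rewrite addSn /= -addSn addnK in down; rewrite addSn down mulnC.
Qed.

Definition bm_weight (m k : nat) : rat :=
  2 ^+ k * ('C(2 * m - 2 * k, m - k) * 'C(m + k, k))%:R.

Definition bm_S (m : nat) : {poly rat} :=
  \sum_(k < m.+1) bm_weight m k *: (1 + 'X) ^+ k.

Lemma P_bm_S m : P m = (2 ^+ (2 * m))^-1 *: bm_S m.
Proof.
apply/polyP => i; rewrite coefZ coef_poly coef_sum /bm_coef.
under [in RHS]eq_bigr do rewrite coefZ coef_1addX_exp.
case: ltnP => [lt_im | le_mi]; last first.
  by rewrite big1 ?mulr0 // => k _; rewrite bin_small ?mulr0 // (leq_trans _ le_mi).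
congr (_ * _).
rewrite -(big_mkord xpredT (fun k => bm_weight m k * 'C(k, i)%:R)).
rewrite (@big_cat_nat _ _ _ i 0 m.+1) ?(ltnW lt_im) //=.
rewrite [X in _ = X + _]big1_seq ?add0r => [|k]; last first.
  by move=> /andP[_]; rewrite mem_index_iota => /andP[_ lt_ki]; rewrite bin_small ?mulr0.
by apply: eq_bigr => k _; rewrite /bm_weight !natrM mulrA.
Qed.

(* Recurrences of the weights: coefficient of Y^0, of Y^(k+1) for k < m,
   and of Y^(m+1) in (m+1) S (m+1) = 2 L_m (S m). *)
Lemma bm_weight_rec_low m :
  m.+1%:R * bm_weight m.+1 0 = 2 * (2 * m%:R + 1) * bm_weight m 0.
Proof.
rewrite /bm_weight ?subn0 ?muln0 ?addn0 ?bin0 ?muln1 ?expr0 ?mul1r ?mul2n.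
have /(congr1 (fun n => n%:R : rat)) := central_bin_succ m.
by rewrite -natrM => ->; rewrite !natrM -(natr1 m.*2) -muln2 natrM; ring.
Qed.

Lemma bm_weight_rec_top m :
  m.+1%:R * bm_weight m.+1 m.+1 = 4 * (2 * m + 1)%:R * bm_weight m m.
Proof.
rewrite /bm_weight !subnn !bin0 !mul1n !addnn exprS mulrCA.
rewrite -[m.+1%:R * _]natrM central_bin_succ.
by rewrite !natrM -(natr1 m.*2) -muln2 natrD !natrM; ring.
Qed.

Lemma bm_weight_rec_mid m k : (k < m)%N ->
  m.+1%:R * bm_weight m.+1 k.+1 =
  4 * (m + k + 1)%:R * bm_weight m k
  + 2 * (2 * m%:R - 1 - 2 * k%:R) * bm_weight m k.+1.
Proof.
move=> lt_km; set n := (m - k.+1)%N.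
have def_m : m = (k + n.+1)%N by rewrite /n; lia.
rewrite /bm_weight.
have -> : (2 * m.+1 - 2 * k.+1 = (n.+1).*2)%N by lia.
have -> : (m.+1 - k.+1 = n.+1)%N by lia.
have -> : (2 * m - 2 * k = (n.+1).*2)%N by lia.
have -> : (m - k = n.+1)%N by lia.
have -> : (2 * m - 2 * k.+1 = n.*2)%N by lia.
have natr_eq (a b : nat) : a = b -> a%:R = b%:R :> rat by move->.
have central := natr_eq _ _ (central_bin_succ n).
have absorb := natr_eq _ _ (mul_bin_diag (m + k.+1) k).
have top := natr_eq _ _ (bin_succ_top m k.+1).
rewrite addnS /= -addnS !natrM in central absorb top; rewrite !natrM -/n.
set c1 := 'C((n.+1).*2, n.+1)%:R in central *; set c0 := 'C(n.*2, n)%:R in central *.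
set u := 'C(m + k, k)%:R in absorb *; set v := 'C(m + k.+1, k.+1)%:R in absorb top *.
set w := 'C(m.+1 + k.+1, k.+1)%:R in top *.
have -> : c1 = (n.+1%:R)^-1 * (2 * n.*2.+1%:R * c0).
  by rewrite -central mulKf // pnatr_eq0.
have -> : u = ((m + k.+1)%:R)^-1 * (k.+1%:R * v).
  by rewrite -absorb mulKf // pnatr_eq0 addnS.
have -> : w = (m.+1%:R)^-1 * ((m.+1 + k.+1)%:R * v).
  by rewrite -top mulKf // pnatr_eq0.
rewrite def_m -!mul2n !(natrD, natrM, exprS) -?natr1 !(natrD, natrM).
field.
have k0 := ler0n rat k; have n0 := ler0n rat n.
by apply/and3P; split; apply: lt0r_neq0; lra.
Qed.

Lemma bm_S_rec m : m.+1%:R *: bm_S m.+1 = 2 *: Lop m (bm_S m).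
Proof.
rewrite /bm_S Lop_sum !scaler_sumr.
under [RHS]eq_bigr do rewrite LopZ Lop_1addX_exp !scalerDr !scalerA.
under [LHS]eq_bigr do rewrite scalerA.
pose Y k : {poly rat} := (1 + 'X) ^+ k.
rewrite (big_ord_split_ends _ (fun k => (m.+1%:R * bm_weight m.+1 k) *: Y k)).
rewrite (sum_shift_regroup _ Y
  (fun k => 2 * bm_weight m k * (2 * m%:R + 2 + 2 * k%:R))
  (fun k => 2 * bm_weight m k * (2 * m%:R + 1 - 2 * k%:R))) /=.
rewrite bm_weight_rec_low bm_weight_rec_top.
congr (_ *: _ + _ + _ *: _); first ring; last by rewrite natrD natrM; ring.
apply: eq_bigr => k _; rewrite bm_weight_rec_mid //.
by congr (_ *: _); rewrite -natr1 natrD; ring.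
Qed.

Lemma Qt_P m : Qt m = (2 ^ m * m`!)%:R *: P m.
Proof.
apply/polyP => i; rewrite coefZ /Qt /Q !coef_poly.
case: ltnP => [lt_im | _]; last by rewrite mulr0.
have le_im : (i <= m)%N by rewrite -ltnS.
by rewrite ltnS leq_subr subKn // lt_im.
Qed.

Lemma Qt_bm_S m : Qt m = (m`!%:R / 2 ^+ m) *: bm_S m.
Proof.
rewrite Qt_P P_bm_S scalerA natrM natrX; congr (_ *: _).
rewrite mul2n -addnn exprD; field.
by rewrite expf_neq0.
Qed.

Theorem mainTheorem7 :
  Qt 0 = 1 /\
  forall m : nat,
    Qt m.+1 =
      ((2 * m%:R) *: 'X + (4 * m%:R + 3)%:P + 2 *: 'X) * Qt m
      + (2 *: 'X * (1 + 'X)) * (Qt m)^`().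
Proof.
split.
  by rewrite Qt_bm_S /bm_S big_ord1 /bm_weight fact0 !expr0 divr1 !scale1r.
move=> m; change (Qt m.+1 = Lop m (Qt m)).
rewrite !Qt_bm_S LopZ factS natrM exprS invfM.
have -> : m.+1%:R * m`!%:R * (2^-1 / 2 ^+ m) = m`!%:R / 2 ^+ m * 2^-1 * m.+1%:R :> rat.
  by ring.
by rewrite -!scalerA bm_S_rec [2^-1 *: _]scalerA mulVf ?scale1r // pnatr_eq0.
Qed.
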